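(* Let $d\ge1$, $p>1$, $s\in(0,1)$, and $\alpha_1,\alpha_2\in\mathbb{R}$ with $\alpha=\alpha_1+\alpha_2$, $\alpha_1p,\alpha_2p\in(-d,sp)$, $0\le\alpha p<sp$ and $sp-\alpha p<d$. Let $p<q<\frac{p(d-s+\alpha)}{d-sp+\alpha p}$, set $r=p\frac{q-1}{p-1}$ and \[ a=\frac{d(q-p)}{(q-1)\big(dp-(d-sp+\alpha p)q\big)}, \] where $\delta_\alpha:=dp-(d-sp+\alpha p)q>0$. Let $\mathcal{C}_\alpha>0$ be the weighted fractional Sobolev constant described in the context. Then for all $u\in\mathcal{D}^{p,q}_{s,\alpha}$, \[ \|u\|_{L^r(\mathbb{R}^d)}\le\mathcal{C}_\alpha^{a/p}\,[u]_{W^{s,p,\alpha}(\mathbb{R}^d)}^a\,\|u\|_{L^q(\mathbb{R}^d)}^{1-a}. \]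
   Context: The weighted Gagliardo seminorm is $[u]_{W^{s,p,\alpha}(\mathbb{R}^d)}^p=\int_{\mathbb{R}^d}\int_{\mathbb{R}^d}\frac{|u(x)-u(y)|^p}{|x-y|^{d+sp}}|x|^{\alpha_1p}|y|^{\alpha_2p}dx\,dy$; $W^{s,p,\alpha}(\mathbb{R}^d)$ is the closure of $C^1_c(\mathbb{R}^d)$ with respect to the norm $(\|u\|_{L^p(\mathbb{R}^d)}^p+[u]_{W^{s,p,\alpha}(\mathbb{R}^d)}^p)^{1/p}$; and $\mathcal{D}^{p,q}_{s,\alpha}=(W^{s,p,\alpha}(\mathbb{R}^d)\cap L^q(\mathbb{R}^d))\setminus\{0\}$. $\mathcal{C}_\alpha=\mathcal{C}_\alpha(d,p,s,\alpha_1,\alpha_2)>0$ is a constant such that, with $p^*_{s,\alpha}=\frac{dp}{d-sp+\alpha p}$, the weighted fractional Sobolev inequality $\|u\|_{L^{p^*_{s,\alpha}}(\mathbb{R}^d)}\le\mathcal{C}_\alpha^{1/p}[u]_{W^{s,p,\alpha}(\mathbb{R}^d)}$ holds for all $u\in W^{s,p,\alpha}(\mathbb{R}^d)$ (such a constant exists under the stated hypotheses by a fractional Caffarelli–Kohn–Nirenberg inequality of Nguyen and Squassina). *)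

(* R^d is modelled as 'rV[R]_d. *)
From HB Require Import structures.
From mathcomp Require Import all_boot all_order all_algebra.
From mathcomp Require Import all_classical all_reals all_analysis.
Set Implicit Arguments. Unset Strict Implicit. Unset Printing Implicit Defensive.
Import Order.TTheory GRing.Theory Num.Theory.
Import numFieldNormedType.Exports.
Local Open Scope classical_set_scope.
Local Open Scope ring_scope.

Section WeightedFractional.
Context {R : realType}.

Definition enorm (d : nat) (x : 'rV[R]_d) : R := Num.sqrt (\sum_(i < d) x ord0 i ^+ 2).

Definition row_of_tuple (d : nat) (t : d.-tuple R) : 'rV[R]_d := \row_(i < d) tnth t i.

(* Lebesgue measurability on R^d (Borel, product sigma-algebra on d.-tuple R) *)
Definition meas_Rd (d : nat) (u : 'rV[R]_d -> R) : Prop :=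
  measurable_fun setT (u \o @row_of_tuple d).

Fixpoint iint (n : nat) : (n.-tuple R -> \bar R) -> \bar R :=
  match n return (n.-tuple R -> \bar R) -> \bar R with
  | 0 => fun f => f [tuple]
  | n'.+1 => fun f =>
      (\int[@lebesgue_measure R]_(x in setT) iint (fun t => f (cons_tuple x t)))%E
  end.

(* integral over R^d of a nonnegative function; by Tonelli it coincides with
   the Lebesgue integral for (nonnegative) measurable integrands *)
Definition intRd (d : nat) (f : 'rV[R]_d -> \bar R) : \bar R :=
  iint (f \o @row_of_tuple d).

Definition Lpnorm (d : nat) (p : R) (u : 'rV[R]_d -> R) : \bar R :=
  poweR (intRd (fun x => (`|u x| `^ p)%:E)) p^-1.

Definition gagliardo_p (d : nat) (s p a1 a2 : R) (u : 'rV[R]_d -> R) : \bar R :=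
  intRd (fun x => intRd (fun y =>
    ((`|u x - u y| `^ p / enorm (x - y) `^ (d%:R + s * p))
      * enorm x `^ (a1 * p) * enorm y `^ (a2 * p))%:E)).

Definition gagliardo (d : nat) (s p a1 a2 : R) (u : 'rV[R]_d -> R) : \bar R :=
  poweR (gagliardo_p s p a1 a2 u) p^-1.

Definition C1c (d : nat) (f : 'rV[R]_d -> R) : Prop :=
  continuous f /\
  (forall (i : 'I_d) (x : 'rV[R]_d), derivable f x (delta_mx ord0 i)) /\
  (forall i : 'I_d, continuous (fun x => 'D_(delta_mx ord0 i) f x)) /\
  compact (closure [set x | f x != 0]).

Definition Wnorm_p (d : nat) (s p a1 a2 : R) (u : 'rV[R]_d -> R) : \bar R :=
  (intRd (fun x => (`|u x| `^ p)%:E) + gagliardo_p s p a1 a2 u)%E.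

(* W^{s,p,alpha}(R^d): closure of C^1_c w.r.t. the norm above *)
Definition inW (d : nat) (s p a1 a2 : R) (u : 'rV[R]_d -> R) : Prop :=
  meas_Rd u /\
  exists phi : nat -> 'rV[R]_d -> R,
    (forall n, C1c (phi n)) /\
    ((fun n => Wnorm_p s p a1 a2 (u \- phi n)) @ \oo --> 0%E).

Definition inLq (d : nat) (q : R) (u : 'rV[R]_d -> R) : Prop :=
  meas_Rd u /\ (intRd (fun x => (`|u x| `^ q)%:E) < +oo)%E.

End WeightedFractional.

(** Writing |u|^r = |u|^(a r) |u|^((1-a) r) and applying
    Hölder's inequality with the exponents p*/(a r) and q/((1-a) r), which are
    conjugate exactly because 1/r = a/p* + (1-a)/q, gives
    ||u||_r <= ||u||_{p*}^a ||u||_q^(1-a); the weighted Sobolev inequality then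
    bounds ||u||_{p*}.  Hölder's inequality for the iterated integral follows
    from Young's inequality applied to the factors normalised by their norms. *)

From HB Require Import structures.
From mathcomp Require Import all_boot all_order all_algebra.
From mathcomp Require Import all_classical all_reals all_analysis.
From mathcomp Require Import measurable_realfun.
From mathcomp Require Import ring lra.
Import Order.TTheory GRing.Theory Num.Theory.
Local Open Scope ring_scope.

Section Young.
Context {R : realType}.

Lemma powR_div_powRV (z c e : R) : 0 <= z -> 0 <= c -> 0 < e ->
  (z / c `^ e^-1) `^ e = z `^ e / c.
Proof.
move=> z0 c0 e0.
have ce : (c `^ e^-1) `^ e = c by rewrite -powRrM mulVf ?gt_eqF // powRr1.
by rewrite powRM ?invr_ge0 ?powR_ge0 // -powR_inv1 ?powR_ge0 // powRAC ce powR_inv1.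
Qed.

Lemma young_normalized (x y A B P Q : R) : 0 <= x -> 0 <= y ->
  0 < A -> 0 < B -> 0 < P -> 0 < Q -> P^-1 + Q^-1 = 1 ->
  x * y <= A `^ P^-1 * B `^ Q^-1 * (x `^ P / (A * P) + y `^ Q / (B * Q)).
Proof.
move=> x0 y0 A0 B0 P0 Q0 PQ.
have cA0 : 0 < A `^ P^-1 by exact: powR_gt0.
have cB0 : 0 < B `^ Q^-1 by exact: powR_gt0.
have := conjugate_powR (divr_ge0 x0 (ltW cA0)) (divr_ge0 y0 (ltW cB0)) P0 Q0 PQ.
rewrite !powR_div_powRV ?(ltW A0) ?(ltW B0) // => young.
have -> : x * y = A `^ P^-1 * B `^ Q^-1 * (x / A `^ P^-1 * (y / B `^ Q^-1)).
  by field; rewrite !gt_eqF.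
by rewrite ler_pM2l ?mulr_gt0 // !invfM [in leRHS]mulrA [in leRHS]mulrA.
Qed.

End Young.

Section IteratedIntegral.
Context {R : realType}.
Local Open Scope ereal_scope.

Lemma iint_ge0 n (F : n.-tuple R -> \bar R) :
  (forall t, 0 <= F t) -> 0 <= iint F.
Proof.
elim: n F => [|n IH] F F0 /=; first exact: F0.
by apply: integral_ge0 => x _; apply: IH.
Qed.

(* The parameter space X is generalised so that the induction can absorb the
   first coordinate into it, as X * R. *)
Lemma measurable_iint_param n dX (X : measurableType dX)
    (G : X * n.-tuple R -> \bar R) :
  measurable_fun setT G -> (forall z, 0 <= G z) ->
  measurable_fun setT (fun x => iint (fun t => G (x, t))).
Proof.
elim: n dX X G => [|n IH] dX X G mG G0 /=.
  by apply: (measurableT_comp mG); exact: measurable_fun_pair.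
pose H (z : X * R) := iint (fun t => G (z.1, cons_tuple z.2 t)).
have mH : measurable_fun setT H.
  apply: (IH _ _ (fun z : (X * R) * n.-tuple R => G (z.1.1, cons_tuple z.1.2 z.2))) => //.
  apply: (measurableT_comp mG); apply: measurable_fun_pair => /=.
    exact: (measurableT_comp measurable_fst measurable_fst).
  apply: (@measurable_cons _ _ _ _ (fun z : (X * R) * n.-tuple R => z.1.2) n snd).
    exact: (measurableT_comp measurable_snd measurable_fst).
  exact: measurable_snd.
apply: (measurable_fun_fubini_tonelli_F (m2 := lebesgue_measure) H mH).
by move=> z; apply: iint_ge0.
Qed.

Lemma measurable_iint_cons n (F : n.+1.-tuple R -> \bar R) :
  measurable_fun setT F -> (forall t, 0 <= F t) ->
  measurable_fun setT (fun x => iint (fun t => F (cons_tuple x t))).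
Proof.
move=> mF F0.
apply: (@measurable_iint_param n _ R (fun z => F (cons_tuple z.1 z.2))) => //.
exact: (measurableT_comp mF (@measurable_cons _ _ _ _ fst n snd _ _)).
Qed.

Lemma measurable_cons_section n (F : n.+1.-tuple R -> \bar R) x :
  measurable_fun setT F -> measurable_fun setT (fun t => F (cons_tuple x t)).
Proof.
move=> mF; apply: (measurableT_comp mF).
exact: (@measurable_cons _ _ _ _ (fun _ => x) n id).
Qed.

Lemma ge0_le_iint n (F G : n.-tuple R -> \bar R) :
  measurable_fun setT F -> measurable_fun setT G ->
  (forall t, 0 <= F t) -> (forall t, F t <= G t) -> iint F <= iint G.
Proof.
elim: n F G => [|n IH] F G mF mG F0 FG /=; first exact: FG.
apply: ge0_le_integral => //.
- by move=> x _; apply: iint_ge0.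
- exact: measurable_iint_cons.
- by apply: measurable_iint_cons => // t; exact: le_trans (F0 t) (FG t).
- by move=> x _; apply: IH => //; apply: measurable_cons_section.
Qed.

Lemma ge0_iintD n (F G : n.-tuple R -> \bar R) :
  measurable_fun setT F -> measurable_fun setT G ->
  (forall t, 0 <= F t) -> (forall t, 0 <= G t) ->
  iint (fun t => F t + G t) = iint F + iint G.
Proof.
elim: n F G => [|n IH] F G mF mG F0 G0 //=.
transitivity (\int[lebesgue_measure]_(x in setT)
  (iint (fun t => F (cons_tuple x t)) + iint (fun t => G (cons_tuple x t)))).
  by apply: eq_integral => x _; apply: IH => //; apply: measurable_cons_section.
apply: ge0_integralD => //; try exact: measurable_iint_cons.
- by move=> x _; apply: iint_ge0.
- by move=> x _; apply: iint_ge0.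
Qed.

Lemma ge0_iintZl n (F : n.-tuple R -> \bar R) (k : R) :
  measurable_fun setT F -> (forall t, 0 <= F t) -> (0 <= k)%R ->
  iint (fun t => k%:E * F t) = k%:E * iint F.
Proof.
elim: n F => [|n IH] F mF F0 k0 //=.
transitivity (\int[lebesgue_measure]_(x in setT)
  (k%:E * iint (fun t => F (cons_tuple x t)))).
  by apply: eq_integral => x _; apply: IH => //; apply: measurable_cons_section.
apply: ge0_integralZl_EFin => //; last exact: measurable_iint_cons.
by move=> x _; apply: iint_ge0.
Qed.

Lemma ge0_iint_eq0_sub n (H K : n.-tuple R -> \bar R) :
  measurable_fun setT H -> measurable_fun setT K ->
  (forall t, 0 <= H t) -> (forall t, 0 <= K t) ->
  (forall t, H t = 0 -> K t = 0) -> iint H = 0 -> iint K = 0.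
Proof.
elim: n H K => [|n IH] H K mH mK H0 K0 HK /=; first exact: HK.
move=> iintH0.
set h := fun x => iint (fun t => H (cons_tuple x t)).
set k := fun x => iint (fun t => K (cons_tuple x t)).
have mh : measurable_fun setT h by exact: measurable_iint_cons.
have mk : measurable_fun setT k by exact: measurable_iint_cons.
have h0 x : 0 <= h x by apply: iint_ge0.
have k0 x : 0 <= k x by apply: iint_ge0.
have int_abs_h : \int[lebesgue_measure]_(x in setT) `|h x| = 0.
  by rewrite -iintH0; apply: eq_integral => x _; rewrite gee0_abs.
have h_ae0 := (ae_eq_integral_abs lebesgue_measure measurableT mh).1 int_abs_h.
have k_ae0 : ae_eq lebesgue_measure setT k (cst 0).
  apply: filterS h_ae0 => x hx Tx.
  apply: (IH (fun t => H (cons_tuple x t))) => //; last exact: hx.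
  - exact: measurable_cons_section.
  - exact: measurable_cons_section.
  - by move=> t; apply: HK.
rewrite -[RHS]((ae_eq_integral_abs lebesgue_measure measurableT mk).2 k_ae0).
by apply: eq_integral => x _; rewrite gee0_abs.
Qed.

Section Hoelder.
Variables (n : nat) (f g : n.-tuple R -> R) (P Q : R).
Hypotheses (mf : measurable_fun setT f) (mg : measurable_fun setT g).
Hypotheses (f0 : forall t, (0 <= f t)%R) (g0 : forall t, (0 <= g t)%R).
Hypotheses (P0 : (0 < P)%R) (Q0 : (0 < Q)%R) (PQ : (P^-1 + Q^-1 = 1)%R).

Let mfg : measurable_fun setT (fun t => (f t * g t)%:E).
Proof. exact/measurable_EFinP/measurable_funM. Qed.

Let mfP : measurable_fun setT (fun t => (f t `^ P)%:E).
Proof. by apply/measurable_EFinP; exact: (measurableT_comp (measurable_powR _) mf). Qed.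

Let mgQ : measurable_fun setT (fun t => (g t `^ Q)%:E).
Proof. by apply/measurable_EFinP; exact: (measurableT_comp (measurable_powR _) mg). Qed.

Lemma iint_mul_le_young (A B : R) : (0 < A)%R -> (0 < B)%R ->
  iint (fun t => (f t * g t)%:E) <=
    (A `^ P^-1 * B `^ Q^-1 / (A * P))%:E * iint (fun t => (f t `^ P)%:E) +
    (A `^ P^-1 * B `^ Q^-1 / (B * Q))%:E * iint (fun t => (g t `^ Q)%:E).
Proof.
move=> A0 B0; set k := (A `^ P^-1 * B `^ Q^-1)%R.
have kAP0 : (0 <= k / (A * P))%R by rewrite divr_ge0 ?mulr_ge0 ?powR_ge0 ?ltW.
have kBQ0 : (0 <= k / (B * Q))%R by rewrite divr_ge0 ?mulr_ge0 ?powR_ge0 ?ltW.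
rewrite -!ge0_iintZl // => [|t|t]; last 2 first.
- by rewrite lee_fin powR_ge0.
- by rewrite lee_fin powR_ge0.
rewrite -ge0_iintD => [|||t|t]; first last.
- by rewrite -EFinM lee_fin mulr_ge0 ?powR_ge0.
- by rewrite -EFinM lee_fin mulr_ge0 ?powR_ge0.
- exact: emeasurable_funM.
- exact: emeasurable_funM.
apply: ge0_le_iint => // [|t|t].
- by apply: emeasurable_funD; apply: emeasurable_funM.
- by rewrite lee_fin mulr_ge0.
rewrite -!EFinM -EFinD lee_fin.
have -> : (k / (A * P) * f t `^ P + k / (B * Q) * g t `^ Q =
           k * (f t `^ P / (A * P) + g t `^ Q / (B * Q)))%R by ring.
exact: young_normalized.
Qed.

Lemma hoelder_iint :
  iint (fun t => (f t * g t)%:E) <=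
    poweR (iint (fun t => (f t `^ P)%:E)) P^-1 *
    poweR (iint (fun t => (g t `^ Q)%:E)) Q^-1.
Proof.
set A := iint (fun t => (f t `^ P)%:E).
set B := iint (fun t => (g t `^ Q)%:E).
have A0 : 0 <= A by apply: iint_ge0 => t; rewrite lee_fin powR_ge0.
have B0 : 0 <= B by apply: iint_ge0 => t; rewrite lee_fin powR_ge0.
have fg0 t : 0 <= (f t * g t)%:E by rewrite lee_fin mulr_ge0.
have RHS0 : 0 <= poweR A P^-1 * poweR B Q^-1 by rewrite mule_ge0 ?poweR_ge0.
have [A_eq0|A_neq0] := eqVneq A 0.
  rewrite (ge0_iint_eq0_sub _ _ _ mfP mfg _ fg0 _ A_eq0) // => t.
    by rewrite lee_fin powR_ge0.
  by case=> /powR_eq0_eq0 ->; rewrite mul0r.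
have [B_eq0|B_neq0] := eqVneq B 0.
  rewrite (ge0_iint_eq0_sub _ _ _ mgQ mfg _ fg0 _ B_eq0) // => t.
    by rewrite lee_fin powR_ge0.
  by case=> /powR_eq0_eq0 ->; rewrite mulr0.
have [A_inf|A_fin] := eqVneq A +oo.
  rewrite A_inf poweRyr ?invr_neq0 ?gt_eqF // gt0_mulye ?leey //.
  by rewrite poweR_gt0 // lt0e B_neq0.
have [B_inf|B_fin] := eqVneq B +oo.
  rewrite B_inf poweRyr ?invr_neq0 ?gt_eqF // gt0_muley ?leey //.
  by rewrite poweR_gt0 // lt0e A_neq0.
have [a a0 eA] : exists2 a : R, (0 < a)%R & A = a%:E.
  exists (fine A); last by rewrite fineK // ge0_fin_numE // ltey.
  by rewrite fine_gt0 // lt0e A_neq0 A0 ltey.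
have [b b0 eB] : exists2 b : R, (0 < b)%R & B = b%:E.
  exists (fine B); last by rewrite fineK // ge0_fin_numE // ltey.
  by rewrite fine_gt0 // lt0e B_neq0 B0 ltey.
apply: (le_trans (iint_mul_le_young _ _ a0 b0)).
rewrite -/A -/B eA eB !poweR_EFin -!EFinM -EFinD lee_fin.
have -> : (a `^ P^-1 * b `^ Q^-1 / (a * P) * a + a `^ P^-1 * b `^ Q^-1 / (b * Q) * b
          = a `^ P^-1 * b `^ Q^-1 * (P^-1 + Q^-1))%R.
  by field; rewrite !gt_eqF.
by rewrite PQ mulr1.
Qed.

End Hoelder.

End IteratedIntegral.

Section Interpolation.
Context {R : realType}.
Local Open Scope ereal_scope.

Lemma Lpnorm_interpolation {d : nat} {u : 'rV[R]_d -> R} {a r p0 q : R} :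
  meas_Rd u -> (0 < r)%R -> (0 < p0)%R -> (0 < q)%R -> (0 < a)%R -> (a < 1)%R ->
  (r^-1 = a / p0 + (1 - a) / q)%R ->
  Lpnorm r u <= poweR (Lpnorm p0 u) a * poweR (Lpnorm q u) (1 - a).
Proof.
move=> mu r_gt0 p0_gt0 q_gt0 a_gt0 a_lt1 er.
have a'_gt0 : (0 < 1 - a)%R by rewrite subr_gt0.
pose f (t : d.-tuple R) : R := `|u (row_of_tuple t)|%R.
have mf : measurable_fun setT f := measurableT_comp (@normr_measurable R setT) mu.
have f0 t : (0 <= f t)%R by exact: normr_ge0.
pose P := (p0 / (a * r))%R; pose Q := (q / ((1 - a) * r))%R.
have P0 : (0 < P)%R by rewrite divr_gt0 ?mulr_gt0.
have Q0 : (0 < Q)%R by rewrite divr_gt0 ?mulr_gt0.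
have PQ : (P^-1 + Q^-1 = 1)%R.
  rewrite /P /Q !invf_div mulrAC [X in (_ + X)%R]mulrAC -mulrDl -er.
  by rewrite mulVf ?gt_eqF.
have := @hoelder_iint R d (fun t => f t `^ (a * r))%R (fun t => f t `^ ((1 - a) * r))%R P Q
  (measurableT_comp (measurable_powR (a * r)) mf)
  (measurableT_comp (measurable_powR ((1 - a) * r)) mf)
  (fun t => powR_ge0 _ _) (fun t => powR_ge0 _ _) P0 Q0 PQ.
have split_r : (fun t => (f t `^ (a * r) * f t `^ ((1 - a) * r))%:E) =
               (fun t => (f t `^ r)%:E).
  have ar : (a * r + (1 - a) * r = r)%R by ring.
  by apply/funext => t; rewrite -powRD ar // gt_eqF.
have powR_P : (fun t => ((f t `^ (a * r)) `^ P)%:E) = (fun t => (f t `^ p0)%:E).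
  by apply/funext => t; rewrite -powRrM mulrC divfK // gt_eqF // mulr_gt0.
have powR_Q : (fun t => ((f t `^ ((1 - a) * r)) `^ Q)%:E) = (fun t => (f t `^ q)%:E).
  by apply/funext => t; rewrite -powRrM mulrC divfK // gt_eqF // mulr_gt0.
rewrite split_r powR_P powR_Q => hoelder.
apply: (le_trans (gt0_ler_poweR _ _ _ hoelder)).
- by rewrite invr_ge0 ltW.
- by rewrite in_itv /= leey andbT; apply: iint_ge0 => t; rewrite lee_fin powR_ge0.
- by rewrite in_itv /= leey andbT mule_ge0 ?poweR_ge0.
have exp_P : (P^-1 * r^-1 = p0^-1 * a)%R by rewrite /P; field; rewrite !gt_eqF.
have exp_Q : (Q^-1 * r^-1 = q^-1 * (1 - a))%R by rewrite /Q; field; rewrite !gt_eqF.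
by rewrite poweRM ?poweR_ge0 // -!poweRrM exp_P exp_Q !poweRrM.
Qed.

End Interpolation.

(* D plays the role of d - s p + alpha p, so that d p / D is p*. *)
Lemma interpolation_exponent {R : realFieldType} {d D p q : R} :
  0 < D -> D < d -> 1 < p -> p < q -> (q - 1) * D < d * (p - 1) ->
  let a := d * (q - p) / ((q - 1) * (d * p - D * q)) in
  [/\ 0 < a, a < 1 & (p * (q - 1) / (p - 1))^-1 = a / (d * p / D) + (1 - a) / q].
Proof.
move=> D0 Dd p1 pq qD_lt a.
have q1 : 1 < q by lra.
have delta0 : 0 < d * p - D * q by nra.
have a0 : 0 < a by rewrite divr_gt0 ?mulr_gt0; lra.
have one_minus_a : 1 - a = q * (d * (p - 1) - D * (q - 1)) / ((q - 1) * (d * p - D * q)).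
  by rewrite /a; field; rewrite (gt_eqF delta0) gt_eqF // subr_gt0.
split=> //.
  by rewrite -subr_gt0 one_minus_a divr_gt0 ?mulr_gt0 //; lra.
rewrite one_minus_a /a; field; rewrite !gt_eqF ?subr_gt0 //; lra.
Qed.

Theorem theorem3p2 (R : realType) (d : nat) (p s a1 a2 q : R) :
  (1 <= d)%N -> 1 < p -> 0 < s < 1 ->
  - d%:R < a1 * p < s * p -> - d%:R < a2 * p < s * p ->
  0 <= (a1 + a2) * p < s * p -> s * p - (a1 + a2) * p < d%:R ->
  p < q < p * (d%:R - s + (a1 + a2)) / (d%:R - s * p + (a1 + a2) * p) ->
  let alpha := a1 + a2 in
  let pstar := d%:R * p / (d%:R - s * p + alpha * p) in
  let r := p * (q - 1) / (p - 1) in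
  let a := d%:R * (q - p) / ((q - 1) * (d%:R * p - (d%:R - s * p + alpha * p) * q)) in
  forall C : R, 0 < C ->
  (forall u : 'rV[R]_d -> R, inW s p a1 a2 u ->
     (Lpnorm pstar u <= (C `^ p^-1)%:E * gagliardo s p a1 a2 u)%E) ->
  forall u : 'rV[R]_d -> R,
    inW s p a1 a2 u -> inLq q u -> u <> (fun _ => 0) ->
    (Lpnorm r u <= (C `^ (a / p))%:E * poweR (gagliardo s p a1 a2 u) a
                    * poweR (Lpnorm q u) (1 - a))%E.
Proof.
move=> _ p1 _ _ _ /andP[_ alpha_s] sobolev_exp /andP[pq q_lt].
move=> alpha pstar r a C _ sobolev u uW _ _.
rewrite -/alpha in alpha_s sobolev_exp q_lt.
have p0 : 0 < p by lra.
pose D := d%:R - s * p + alpha * p.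
have D0 : 0 < D by rewrite /D; lra.
have Dd : D < d%:R by rewrite /D; lra.
have qD_lt : (q - 1) * D < d%:R * (p - 1).
  by move: q_lt; rewrite ltr_pdivlMr // /D; lra.
have [a_gt0 a_lt1 er] := interpolation_exponent D0 Dd p1 pq qD_lt.
have r0 : 0 < r by rewrite divr_gt0 ?mulr_gt0; lra.
have pstar0 : 0 < pstar by rewrite divr_gt0 ?mulr_gt0 //; lra.
apply: (le_trans (Lpnorm_interpolation uW.1 r0 pstar0 _ a_gt0 a_lt1 er)); first lra.
apply: lee_wpmul2r; first exact: poweR_ge0.
apply: (le_trans (gt0_ler_poweR (ltW a_gt0) _ _ (sobolev u uW))).
- by rewrite in_itv /= leey andbT poweR_ge0.
- by rewrite in_itv /= leey andbT mule_ge0 ?poweR_ge0 // lee_fin powR_ge0.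
by rewrite poweRM ?poweR_ge0 ?lee_fin ?powR_ge0 // poweR_EFin -powRrM mulrC.
Qed.
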